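(* Let $\mathbb{K}$ be a field of characteristic zero, let $p,q\in\mathbb{Z}^n_{\ge0}$ be nonzero vectors and let $\beta,\gamma\in\mathbb{K}^n$ be nonzero, non-proportional vectors. Suppose $\langle\beta,q\rangle=0$ and let $r\in\mathbb{Z}_{\ge0}$ be the smallest number such that $\langle\gamma,p+rq\rangle=0$. Then the Lie algebra $\mathfrak{g}(\Delta^q_\gamma,\Delta^p_\beta)$ generated by $\Delta^q_\gamma$ and $\Delta^p_\beta$ has dimension $r+2$ and is $(r+1)$-step nilpotent; moreover, the derivations $\Delta^q_\gamma,\Delta^p_\beta,\Delta^{p+q}_\beta,\ldots,\Delta^{p+rq}_\beta$ form a basis of this Lie algebra.
   Context: For $p\in\mathbb{Z}^n_{\ge0}$ and $\beta\in\mathbb{K}^n$, $\Delta^p_\beta:=x_1^{p_1}\cdots x_n^{p_n}\sum_{j=1}^n\beta_jx_j\partial_j$ (a derivation of $\mathbb{K}[x_1,\ldots,x_n]$, $\partial_j=\partial/\partial x_j$). $\langle\beta,u\rangle:=\sum_i\beta_iu_i$. The Lie bracket is the commutator of derivations. *)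

From mathcomp Require Import all_boot all_algebra.
From mathcomp Require Import mpoly.
Set Implicit Arguments. Unset Strict Implicit. Unset Printing Implicit Defensive.
Import GRing.Theory.
Local Open Scope ring_scope.

Section Defs.
Variables (K : fieldType) (n : nat).
Local Notation P := {mpoly K[n]}.
Local Notation Op := (P -> P).

Definition xmon (p : 'I_n -> nat) : P := \prod_(i < n) 'X_i ^+ p i.

Definition Delta (p : 'I_n -> nat) (beta : 'I_n -> K) : Op :=
  fun f => xmon p * \sum_(j < n) beta j *: ('X_j * mderiv j f).

Definition lie_bracket (u v : Op) : Op := fun f => u (v f) - v (u f).

Definition op0 : Op := fun _ => 0.
Definition op_comb (a : K) (u v : Op) : Op := fun f => a *: u f + v f.

Definition is_subspace (S : Op -> Prop) : Prop :=
  S op0 /\ (forall a u v, S u -> S v -> S (op_comb a u v)).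

Definition is_lie_subalgebra (S : Op -> Prop) : Prop :=
  is_subspace S /\ (forall u v, S u -> S v -> S (lie_bracket u v)).

Definition lie_gen (u1 u2 : Op) : Op -> Prop :=
  fun w => forall S, is_lie_subalgebra S -> S u1 -> S u2 -> S w.

Definition span_set (A : Op -> Prop) : Op -> Prop :=
  fun w => forall S, is_subspace S -> (forall u, A u -> S u) -> S w.

(* lower central series: lcs g 0 = g = g^1, lcs g (k+1) = [g, lcs g k] *)
Fixpoint lcs (g : Op -> Prop) (k : nat) : Op -> Prop :=
  match k with
  | 0 => g
  | k'.+1 => span_set (fun w => exists u v, g u /\ lcs g k' v /\ w = lie_bracket u v)
  end.

(* c-step nilpotent: g^{c+1} = 0 and g^c <> 0 (g^1 = g), c >= 1 *)
Definition step_nilpotent (g : Op -> Prop) (c : nat) : Prop :=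
  (0 < c)%N /\
  (forall w, lcs g c w -> forall f, w f = 0) /\
  (exists w, lcs g c.-1 w /\ exists f, w f != 0).

Definition lin_comb (l : seq Op) (c : nat -> K) : Op :=
  fun f => \sum_(i < size l) c i *: (nth op0 l i) f.

Definition lin_indep (l : seq Op) : Prop :=
  forall c : nat -> K, (forall f, lin_comb l c f = 0) ->
    forall i, (i < size l)%N -> c i = 0.

Definition is_basis (g : Op -> Prop) (l : seq Op) : Prop :=
  lin_indep l /\ (forall w, g w <-> exists c, w = lin_comb l c).

Definition has_dim (g : Op -> Prop) (d : nat) : Prop :=
  exists l, size l = d /\ is_basis g l.

End Defs.

(* Write [Delta^a_v = x^a E_v] with [E_v = \sum_j v_j x_j d/dx_j].  [E_v] is a
   derivation acting on monomials by [E_v x^m = <v,m> x^m], and the [E_v]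
   commute, so
     [[Delta^a_v, Delta^b_w] = <v,b> Delta^(a+b)_w - <w,a> Delta^(a+b)_v].
   Put [B_0 = Delta^q_gamma] and [B_(k+1) = Delta^(p+kq)_beta].  As
   [<beta,q> = 0], the [B_(k+1)] commute pairwise and
   [[B_0, B_(k+1)] = <gamma,p+kq> B_(k+2)]: these are the relations of the model
   filiform Lie algebra, with structure constants nonzero for [k < r] and zero
   for [k = r].  Hence the span of [B_0, ..., B_(r+1)] is a Lie algebra
   generated by [B_0] and [B_1], and for [k >= 1] the term [g^(k+1)] of its
   lower central series lies in the span of [B_(k+1), ..., B_(r+1)] and contains
   [B_(k+1)].  The [B_i] are independent: on [x_j] they produce
   [gamma_j x^q x_j] and [beta_j x^(p+kq) x_j], the exponents [p+kq] are
   distinct because [q <> 0], and [gamma] is not proportional to [beta]. *)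

From HB Require Import structures.
From mathcomp Require Import all_boot all_algebra.
From mathcomp Require Import mpoly.
From mathcomp Require Import ring zify.
From Stdlib Require Import FunctionalExtensionality.
Set Implicit Arguments. Unset Strict Implicit. Unset Printing Implicit Defensive.
Import GRing.Theory.
Local Open Scope ring_scope.

Arguments op0 {K n}.

Section Euler.
Variables (K : fieldType) (n : nat).
Local Notation P := {mpoly K[n]}.
Implicit Types (a b c : 'I_n -> nat) (v w : 'I_n -> K) (f g : P).

Definition euler (v : 'I_n -> K) (f : P) : P := \sum_(j < n) v j *: ('X_j * mderiv j f).

Definition dot (v : 'I_n -> K) (a : 'I_n -> nat) : K := \sum_(i < n) v i * (a i)%:R.

Definition monom (a : 'I_n -> nat) : 'X_{1..n} := [multinom a i | i < n].

Lemma euler_is_linear v : linear (euler v).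
Proof.
move=> c f g; rewrite /euler scaler_sumr -big_split; apply: eq_bigr => j _ /=.
by rewrite linearP mulrDr scalerDr -scalerAr !scalerA mulrC.
Qed.

HB.instance Definition _ v :=
  GRing.isLinear.Build K P P _ (euler v) (euler_is_linear v).

Lemma DeltaE a v f : Delta a v f = xmon K a * euler v f.
Proof. by []. Qed.

Lemma Delta_is_linear a v : linear (Delta a v).
Proof. by move=> c f g; rewrite !DeltaE linearP /= mulrDr scalerAr. Qed.

HB.instance Definition _ a v :=
  GRing.isLinear.Build K P P _ (Delta a v) (Delta_is_linear a v).

Lemma euler_mpolyX v m : euler v 'X_[m] = (\sum_(i < n) v i * (m i)%:R) *: 'X_[m].
Proof.
rewrite /euler scaler_suml; apply: eq_bigr => j _.
rewrite mderivX -scalerAr scalerA.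
have [->|mj_neq0] := eqVneq (m j) 0%N; first by rewrite mulr0 !scale0r.
by rewrite -mpolyXD addmC submK // lep1mP.
Qed.

Lemma xmonE a : xmon K a = 'X_[monom a].
Proof. by rewrite mpolyXE_id; apply: eq_bigr => i _; rewrite mnmE. Qed.

Lemma xmonD a b : xmon K (fun i => a i + b i)%N = xmon K a * xmon K b.
Proof. by rewrite /xmon -big_split; apply: eq_bigr => i _; rewrite exprD. Qed.

Lemma euler_xmon v a : euler v (xmon K a) = dot v a *: xmon K a.
Proof. by rewrite xmonE euler_mpolyX; congr (_ *: _); apply: eq_bigr => i _; rewrite mnmE. Qed.

Lemma eulerM v f g : euler v (f * g) = euler v f * g + f * euler v g.
Proof.
rewrite /euler mulr_suml mulr_sumr -big_split; apply: eq_bigr => j _ /=.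
rewrite mderivM mulrDr scalerDr -scalerAl -scalerAr.
by congr (_ *: _ + _ *: _); [exact: mulrA | exact: mulrCA].
Qed.

Lemma euler_comm v w f : euler v (euler w f) = euler w (euler v f).
Proof.
rewrite (mpolyE f) !(linear_sum (euler _) (msupp f)); apply: eq_bigr => m _.
by rewrite !linearZ /= !euler_mpolyX !linearZ /= !euler_mpolyX !scalerA; congr (_ *: _); ring.
Qed.

Lemma Delta_bracket a b c v w : (forall i, c i = a i + b i)%N ->
  lie_bracket (Delta a v) (Delta b w) =
  (fun f => dot v b *: Delta c w f - dot w a *: Delta c v f).
Proof.
move=> cE; apply: functional_extensionality => f.
have xmon_c : xmon K c = xmon K a * xmon K b.
  by rewrite -xmonD; congr xmon; apply: functional_extensionality.
rewrite /lie_bracket !DeltaE !eulerM !euler_xmon (euler_comm v w) xmon_c -!mul_mpolyC.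
ring.
Qed.

Lemma Delta_X a v j : Delta a v 'X_j = v j *: 'X_[monom a + U_(j)].
Proof.
rewrite DeltaE euler_mpolyX xmonE -scalerAr mpolyXD.
congr (_ *: _); rewrite (bigD1 j) //= mnm1E eqxx mulr1 big1 ?addr0 // => i ne_ij.
by rewrite mnm1E eq_sym (negbTE ne_ij) mulr0.
Qed.

Lemma Delta_X_neq0 a v j : v j != 0 -> Delta a v 'X_j != 0.
Proof.
move=> vj_neq0; rewrite Delta_X scaler_eq0 negb_or vj_neq0 /=.
apply/eqP => /(congr1 (mcoeff (monom a + U_(j)))).
by rewrite mcoeffX eqxx mcoeff0 => /eqP; rewrite oner_eq0.
Qed.

(* Applied to [x_j], the operator [Delta a v] produces only the monomial [x^a x_j]. *)
Lemma sum_Delta_eq0_coef N (a : nat -> 'I_n -> nat) (v : nat -> 'I_n -> K) (e : nat -> K) :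
  (forall f, \sum_(i < N) e i *: Delta (a i) (v i) f = 0) ->
  forall b j, \sum_(i < N | monom (a i) == monom b) e i * v i j = 0.
Proof.
move=> sum_eq0 b j; move: (sum_eq0 'X_j) => /(congr1 (mcoeff (monom b + U_(j)))).
rewrite mcoeff0 raddf_sum => coef_eq0; rewrite -[RHS]coef_eq0 big_mkcond /=.
apply: eq_bigr => i _.
by rewrite mcoeffZ Delta_X mcoeffZ mcoeffX eqm_add2r; case: eqP; rewrite ?mulr1 ?mulr0.
Qed.

End Euler.

Section Subspaces.
Variables (K : fieldType) (n : nat).
Local Notation Op := ({mpoly K[n]} -> {mpoly K[n]}).
Implicit Types (S : Op -> Prop) (u v : Op).

Lemma subspace_scale S a u : is_subspace S -> S u -> S (fun f => a *: u f).
Proof.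
move=> [S0 S_comb] Su; have := S_comb a u _ Su S0.
by congr S; apply: functional_extensionality => f; rewrite /op_comb /op0 addr0.
Qed.

Lemma subspace_opp S u : is_subspace S -> S u -> S (fun f => - u f).
Proof.
move=> sS /(subspace_scale (-1) sS).
by congr S; apply: functional_extensionality => f; rewrite scaleN1r.
Qed.

Lemma subspace_sum S m (F : 'I_m -> Op) :
  is_subspace S -> (forall i, S (F i)) -> S (fun f => \sum_(i < m) F i f).
Proof.
move=> [S0 S_comb]; elim: m F => [|m IH] F SF.
  by congr S: S0; apply: functional_extensionality => f; rewrite big_ord0.
have := S_comb 1 _ _ (IH (fun i => F (widen_ord (leqnSn m) i)) (fun i => SF _)) (SF ord_max).
by congr S; apply: functional_extensionality => f; rewrite /op_comb scale1r big_ord_recr.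
Qed.

Lemma scale0_op u : (fun f => 0 *: u f) = op0.
Proof. by apply: functional_extensionality => f; rewrite scale0r. Qed.

Lemma lie_bracket_diag u : lie_bracket u u = op0.
Proof. by apply: functional_extensionality => f; rewrite /lie_bracket subrr. Qed.

Lemma lie_bracket_anti u v : lie_bracket v u = (fun f => - lie_bracket u v f).
Proof. by apply: functional_extensionality => f; rewrite /lie_bracket opprB. Qed.

End Subspaces.

Section Combinations.
Variables (K : fieldType) (n : nat).
Local Notation P := {mpoly K[n]}.
Local Notation Op := (P -> P).
Variables (B : nat -> {linear P -> P}) (N : nat).

Definition comb (e : nat -> K) : Op := fun f => \sum_(i < N) e i *: B i f.

Definition tail_span k (u : Op) : Prop :=
  exists2 e, u = comb e & forall m, (m < k)%N -> e m = 0.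

Lemma lin_comb_mkseq e : lin_comb (mkseq (fun i => B i : Op) N) e = comb e.
Proof.
apply: functional_extensionality => f; rewrite /lin_comb size_mkseq.
by apply: eq_bigr => i _; rewrite nth_mkseq.
Qed.

Lemma tail_span_subspace k : is_subspace (tail_span k).
Proof.
split.
  exists (fun=> 0) => //; apply: functional_extensionality => f.
  by rewrite /comb big1 // => i _; rewrite scale0r.
move=> a _ _ [d -> d_tail] [e -> e_tail]; exists (fun m => a * d m + e m).
  apply: functional_extensionality => f; rewrite /op_comb /comb scaler_sumr -big_split.
  by apply: eq_bigr => i _; rewrite scalerDl scalerA.
by move=> m lt_mk; rewrite d_tail ?e_tail // mulr0 addr0.
Qed.

Lemma tail_span_le k k' u : (k' <= k)%N -> tail_span k u -> tail_span k' u.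
Proof. by move=> le_k'k [e -> e_tail]; exists e => // m lt_mk'; apply: e_tail; lia. Qed.

Lemma tail_span_B k : (k < N)%N -> tail_span k (B k).
Proof.
move=> lt_kN; exists (fun m => (m == k)%:R); last by move=> m lt_mk; rewrite ltn_eqF.
apply: functional_extensionality => f.
rewrite /comb (bigD1 (Ordinal lt_kN)) //= eqxx scale1r big1 ?addr0 // => i ne_ik.
by rewrite (_ : (i == k :> nat) = false) ?scale0r //; exact: negbTE ne_ik.
Qed.

Lemma bracket_comb d e : lie_bracket (comb d) (comb e) =
  (fun f => \sum_(i < N) \sum_(j < N) (d i * e j) *: lie_bracket (B i) (B j) f).
Proof.
have combM d' e' f :
    comb d' (comb e' f) = \sum_(i < N) \sum_(j < N) (d' i * e' j) *: B i (B j f).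
  apply: eq_bigr => i _; rewrite linear_sum scaler_sumr.
  by apply: eq_bigr => j _; rewrite linearZ scalerA.
apply: functional_extensionality => f.
rewrite /lie_bracket !combM [X in _ - X]exchange_big -sumrB; apply: eq_bigr => i _.
by rewrite -sumrB; apply: eq_bigr => j _; rewrite scalerBr [e _ * _]mulrC.
Qed.

End Combinations.

Section ModelFiliform.
Variables (K : fieldType) (n : nat).
Local Notation P := {mpoly K[n]}.
Local Notation Op := (P -> P).
Variables (B : nat -> {linear P -> P}) (c : nat -> K) (r : nat).
Hypothesis bracket_B0S : forall k, lie_bracket (B 0) (B k.+1) = (fun f => c k *: B k.+2 f).
Hypothesis bracket_BSS : forall k l, lie_bracket (B k.+1) (B l.+1) = op0.
Hypothesis c_neq0 : forall k, (k < r)%N -> c k != 0.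
Hypothesis c_r : c r = 0.

Local Notation tail_span := (tail_span B r.+2).
Local Notation g := (lie_gen (B 0) (B 1)).

Lemma bracket_B0S_tail k : (k <= r)%N -> tail_span k.+2 (lie_bracket (B 0) (B k.+1)).
Proof.
rewrite bracket_B0S leq_eqVlt => /predU1P[-> | lt_kr].
  by rewrite c_r scale0_op; exact: (tail_span_subspace _ _ _).1.
by apply: subspace_scale (tail_span_subspace _ _ _) (tail_span_B _ _); rewrite !ltnS.
Qed.

Lemma bracket_B_tail i j : (i < r.+2)%N -> (j < r.+2)%N ->
  tail_span (maxn 2 j.+1) (lie_bracket (B i) (B j)).
Proof.
have tS k := tail_span_subspace B r.+2 k.
case: i => [|i] lt_i; case: j => [|j] lt_j.
- by rewrite lie_bracket_diag; exact: (tS _).1.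
- by rewrite (maxn_idPr _) //; apply: bracket_B0S_tail.
- rewrite lie_bracket_anti.
  by apply: tail_span_le (subspace_opp (tS _) (bracket_B0S_tail _)).
- by rewrite bracket_BSS; exact: (tS _).1.
Qed.

Lemma bracket_comb_tail k d u : tail_span k u ->
  tail_span (maxn 2 k.+1) (lie_bracket (comb B r.+2 d) u).
Proof.
have tS k' := tail_span_subspace B r.+2 k'.
case=> e -> e_tail; rewrite bracket_comb.
apply: subspace_sum (tS _) _ => i; apply: subspace_sum (tS _) _ => j.
have [lt_jk | le_kj] := ltnP j k.
  by rewrite e_tail // mulr0 scale0_op; exact: (tS _).1.
apply: subspace_scale (tS _) (tail_span_le _ (bracket_B_tail (ltn_ord i) (ltn_ord j))).
lia.
Qed.

Lemma B_shift k : (k < r)%N ->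
  (B k.+2 : Op) = (fun f => (c k)^-1 *: lie_bracket (B 0) (B k.+1) f).
Proof.
move=> lt_kr; rewrite bracket_B0S; apply: functional_extensionality => f.
by rewrite scalerA mulVf ?scale1r ?c_neq0.
Qed.

Lemma B_in_lie_subalgebra S : is_lie_subalgebra S -> S (B 0) -> S (B 1) ->
  forall i, (i < r.+2)%N -> S (B i).
Proof.
move=> [sS S_bracket] S_B0 S_B1 [_ | i]; first exact: S_B0.
elim: i => [_ | i IH lt_i]; first exact: S_B1.
rewrite B_shift; last exact: lt_i.
by apply: subspace_scale sS (S_bracket _ _ S_B0 (IH (ltnW lt_i))).
Qed.

Lemma lie_gen_tail_span w : g w <-> tail_span 0 w.
Proof.
split => [g_w | [e -> _] S S_alg S_B0 S_B1].
  apply: g_w; [split | |].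
  - exact: tail_span_subspace.
  - by move=> _ v [d -> _] v_tail; apply: tail_span_le (bracket_comb_tail d v_tail).
  - exact: tail_span_B.
  - exact: tail_span_le (tail_span_B _ _).
apply: subspace_sum S_alg.1 _ => i; apply: subspace_scale S_alg.1 _.
exact: B_in_lie_subalgebra.
Qed.

Lemma lcs_tail_span k w : lcs g k.+1 w -> tail_span k.+2 w.
Proof.
elim: k w => [|k IH] w; apply; try exact: tail_span_subspace.
  move=> _ [u [v [/lie_gen_tail_span [d -> _] [/lie_gen_tail_span v_tail ->]]]].
  exact: tail_span_le (bracket_comb_tail d v_tail).
move=> _ [u [v [/lie_gen_tail_span [d -> _] [/IH v_tail ->]]]].
by have := bracket_comb_tail d v_tail; rewrite (maxn_idPr _).
Qed.

Lemma B_in_lcs k : (k <= r)%N -> lcs g k (B k.+1).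
Proof.
elim: k => [_ | k IH lt_kr] /=; first by move=> S _ _ S_B1.
rewrite B_shift // => S sS S_gen; apply: subspace_scale sS (S_gen _ _).
exists (B 0), (B k.+1); split; first by move=> S' _ S'_B0.
by split; first exact: IH (ltnW lt_kr).
Qed.

Lemma model_filiform_step_nilpotent : (exists f, B r.+1 f != 0) -> step_nilpotent g r.+1.
Proof.
move=> [f0 B_f0]; split=> //; split.
  move=> w /lcs_tail_span [e -> e_tail] f.
  by rewrite /comb big1 // => i _; rewrite e_tail ?scale0r.
by exists (B r.+1); split; [exact: B_in_lcs | exists f0].
Qed.

Lemma model_filiform_basis : lin_indep (mkseq (fun i => B i : Op) r.+2) ->
  is_basis g (mkseq (fun i => B i : Op) r.+2).
Proof.
move=> indep; split=> // w; rewrite lie_gen_tail_span.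
split=> [[e -> _] | [e ->]]; exists e => //.
- exact/esym/lin_comb_mkseq.
- exact: lin_comb_mkseq.
Qed.

End ModelFiliform.

Section DeltaFamily.
Variables (K : fieldType) (n : nat) (p q : 'I_n -> nat) (beta gamma : 'I_n -> K).
Local Notation P := {mpoly K[n]}.
Local Notation Op := (P -> P).

Definition family_exp (i : nat) : 'I_n -> nat :=
  if i is k.+1 then (fun x => p x + k * q x)%N else q.
Definition family_vec (i : nat) : 'I_n -> K := if i is _.+1 then beta else gamma.
Definition Delta_family (i : nat) : {linear P -> P} := Delta (family_exp i) (family_vec i).

Lemma Delta_family1 : (Delta_family 1 : Op) = Delta p beta.
Proof. by congr Delta; apply: functional_extensionality => x; rewrite /= addn0. Qed.

Lemma Delta_family_mkseq r : mkseq (fun i => Delta_family i : Op) r.+2 =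
  Delta q gamma :: [seq Delta (fun i => p i + k * q i)%N beta | k <- iota 0 r.+1].
Proof.
rewrite /mkseq.
have -> : iota 0 r.+2 = 0 :: map (addn 1) (iota 0 r.+1) by rewrite -iotaDl.
by rewrite map_cons -map_comp.
Qed.

Hypothesis beta_q : dot beta q = 0.

Lemma dot_beta_family_exp k : dot beta (family_exp k.+1) = dot beta p.
Proof.
rewrite /dot (eq_bigr (fun i => beta i * (p i)%:R + k%:R * (beta i * (q i)%:R))).
  by rewrite big_split /= -mulr_sumr -/(dot beta q) beta_q mulr0 addr0.
by move=> i _; rewrite natrD natrM mulrDr mulrCA.
Qed.

Lemma Delta_family_bracket0S k : lie_bracket (Delta_family 0) (Delta_family k.+1) =
  (fun f => dot gamma (family_exp k.+1) *: Delta_family k.+2 f).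
Proof.
rewrite (@Delta_bracket _ _ _ _ (family_exp k.+2)); last by move=> i; rewrite /= mulSn addnCA.
by apply: functional_extensionality => f /=; rewrite beta_q scale0r subr0.
Qed.

Lemma Delta_family_bracketSS k l : lie_bracket (Delta_family k.+1) (Delta_family l.+1) = op0.
Proof.
rewrite (@Delta_bracket _ _ _ _ (fun x => family_exp k.+1 x + family_exp l.+1 x)%N) //.
by apply: functional_extensionality => f; rewrite !dot_beta_family_exp subrr.
Qed.

Lemma family_exp_inj k l : (exists i, q i <> 0%N) ->
  monom (family_exp k.+1) = monom (family_exp l.+1) -> k = l.
Proof.
move=> [i q_i] /(congr1 (fun m : 'X_{1..n} => m i)); rewrite /= !mnmE => /eqP.
by rewrite eqn_add2l eqn_mul2r => /orP[/eqP | /eqP].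
Qed.

Lemma Delta_family_lin_indep r : (exists i, q i <> 0%N) -> (exists j, beta j != 0) ->
  ~ (exists a : K, forall i, gamma i = a * beta i) ->
  lin_indep (mkseq (fun i => Delta_family i : Op) r.+2).
Proof.
move=> q_neq0 [j0 beta_j0] not_prop e; rewrite size_mkseq lin_comb_mkseq => comb_eq0.
have coef := @sum_Delta_eq0_coef _ _ r.+2 family_exp family_vec e comb_eq0.
have e0 : e 0 = 0.
  apply/eqP/contraT => e0_neq0; exfalso; apply: not_prop.
  pose s := \sum_(i < r.+2 | (monom (family_exp i) == monom q) && (i != ord0)) e i.
  exists (- s / e 0) => j; move: (coef q j); rewrite (bigD1 ord0) ?eqxx //=.
  rewrite (eq_bigr (fun i : 'I_r.+2 => e i * beta j)) -?mulr_suml; last first.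
    by case=> -[|i] lt_i /andP[_ ne0].
  move/eqP; rewrite addr_eq0 => /eqP gamma_j.
  by apply: (mulfI e0_neq0); rewrite gamma_j /s; field.
case=> [_ | k lt_k]; first exact: e0.
move: (coef (family_exp k.+1) j0); rewrite (bigD1 (Ordinal lt_k)) ?eqxx //= big1 ?addr0.
  by move/eqP; rewrite mulf_eq0 (negbTE beta_j0) orbF => /eqP.
case=> -[|l] lt_l /andP[same_exp ne_lk]; first by rewrite e0 mul0r.
move/eqP/(family_exp_inj q_neq0): same_exp => l_k.
by move: ne_lk; rewrite -val_eqE /= l_k eqxx.
Qed.

End DeltaFamily.

Theorem proposition2 (K : fieldType) (n : nat)
  (p q : 'I_n -> nat) (beta gamma : 'I_n -> K) (r : nat) :
  [pchar K] =i pred0 ->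
  (exists i, p i <> 0%N) -> (exists i, q i <> 0%N) ->
  (exists i, beta i != 0) -> (exists i, gamma i != 0) ->
  ~ (exists c : K, forall i, gamma i = c * beta i) ->
  \sum_(i < n) beta i * (q i)%:R = 0 ->
  \sum_(i < n) gamma i * (p i + r * q i)%:R = 0 ->
  (forall s, (s < r)%N -> \sum_(i < n) gamma i * (p i + s * q i)%:R != 0) ->
  let g := lie_gen (Delta q gamma) (Delta p beta) in
  has_dim g (r + 2) /\ step_nilpotent g (r + 1) /\
  is_basis g (Delta q gamma :: [seq Delta (fun i => p i + k * q i)%N beta | k <- iota 0 r.+1]).
Proof.
move=> _ _ q_neq0 beta_neq0 _ not_prop beta_q c_r c_neq0 g.
have bracket0S := Delta_family_bracket0S p gamma beta_q.
have bracketSS := Delta_family_bracketSS p gamma beta_q.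
have basis := model_filiform_basis bracket0S bracketSS c_neq0 c_r
  (Delta_family_lin_indep q_neq0 beta_neq0 not_prop).
rewrite /g -(Delta_family1 p q beta gamma) -Delta_family_mkseq addn1 addn2.
split; first by eexists; split; last exact: basis; rewrite size_mkseq.
split=> //; apply: model_filiform_step_nilpotent bracket0S bracketSS c_neq0 c_r _.
by have [j beta_j] := beta_neq0; exists 'X_j; apply: Delta_X_neq0.
Qed.
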